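(* Consider the remote-estimation Markov decision process described in the context, and suppose in addition that the source is non-prioritized and symmetric: $D_{i,j}=D$ and $g_{i,j}=g$ for all $i\ne j$, and $Q_{i,j}=p$ for $i\ne j$, $Q_{i,i}=\bar p$, where $\bar p+(M-1)p=1$ and $0<p<1$. Then the optimal (switching) policy degenerates to a threshold policy: there is a single threshold $\tau^*\in\{1,2,\dots\}\cup\{\infty\}$ such that $\tau^*_{i,j}=\tau^*$ for all $i\ne j$, i.e. the sensor transmits in state $(i,j,\delta)$, $i\neq j$, if and only if $\delta\ge\tau^*$, and never transmits in synced states.
   Context: Model. A source $\{X_t\}_{t\ge1}$ is a homogeneous discrete-time Markov chain on $\mathcal{X}=\{1,\dots,M\}$ with irreducible transition matrix $Q=(Q_{i,j})$, with at least one $i$ having $Q_{i,i}>0$. At each time $t$ a sensor chooses $A_t\in\{0,1\}$ (1 = transmit). The channel is i.i.d. Bernoulli $H_t$ with $\Pr[H_t=1]=p_s$, $p_f=1-p_s$, independent of the source. The estimate evolves as $\hat X_{t+1}=X_t$ if $A_t=1,H_t=1$, else $\hat X_{t+1}=\hat X_t$. The AoCE is $\Delta_t=\Delta_{t-1}+1$ if $X_t\ne\hat X_t$ and $(X_t,\hat X_t)=(X_{t-1},\hat X_{t-1})$; $\Delta_t=1$ if $X_t\ne\hat X_t$ and $(X_t,\hat X_t)\ne(X_{t-1},\hat X_{t-1})$; $\Delta_t=0$ if $X_t=\hat X_t$. State $S_t=(X_t,\hat X_t,\Delta_t)$. Transition probabilities: for $s=(i,j,\delta)$, $i\ne j$,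 under $a=0$: to $(i,j,\delta+1)$ w.p. $Q_{i,i}$, to $(j,j,0)$ w.p. $Q_{i,j}$, to $(k,j,1)$ w.p. $Q_{i,k}$ ($k\ne i,j$); under $a=1$: to $(i,i,0)$ w.p. $Q_{i,i}p_s$, to $(k,i,1)$ w.p. $Q_{i,k}p_s$ ($k\ne i$), to $(i,j,\delta+1)$ w.p. $Q_{i,i}p_f$, to $(j,j,0)$ w.p. $Q_{i,j}p_f$, to $(k,j,1)$ w.p. $Q_{i,k}p_f$ ($k\ne i,j$). For $s=(i,i,0)$ and any $a$: to $(i,i,0)$ w.p. $Q_{i,i}$, to $(k,i,1)$ w.p. $Q_{i,k}$ ($k\ne i$). Costs: $c(i,j,\delta)=D_{i,j}g_{i,j}(\delta)$ for $i\ne j$ with $D_{i,j}>0$ and $g_{i,j}$ non-negative, non-decreasing; $c(i,i,0)=0$; per-stage cost $l(s,a)=c(s)+\lambda\mathbb{1}\{a\ne0\}$, $\lambda\ge0$. Policies may depend on the full history $(X_{1:t},\hat X_{1:t},A_{1:t-1})$; average cost $\mathcal{L}(\pi)=\limsup_{T\to\infty}\frac1T\sum_{t=1}^T\mathbb{E}^\pi[l(S_t,A_t)\mid S_1=s_1]$; an optimal policy attains $\inf_\pi\mathcal{L}(\pi)$. A switching policy is one that never transmits in synced states $(i,i,0)$ and, for each error $(i,j)$, $i\ne j$, transmits in $(i,j,\delta)$ iff $\delta\ge\tau_{i,j}$ for some threshold $\tau_{i,j}\in\{1,2,\dots\}\cup\{\infty\}$. *)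

From Stdlib Require Import Reals List Arith Lia Bool.
From Coquelicot Require Import Coquelicot.
Import ListNotations.
Open Scope R_scope.

(* Source alphabet {1,...,M} is encoded as {0,...,M-1}.
   A state (x, xhat, delta) of the MDP. Actions: true = transmit (a=1). *)
Definition state : Type := (nat * nat * nat)%type.

Definition valid_state (M : nat) (s : state) : Prop :=
  let '(i, j, d) := s in
  (i < M)%nat /\ (j < M)%nat /\
  ((i = j /\ d = 0%nat) \/ (i <> j /\ (1 <= d)%nat)).

Fixpoint Rsum (l : list R) : R :=
  match l with [] => 0 | x :: t => x + Rsum t end.

Fixpoint Qpow (M : nat) (Q : nat -> nat -> R) (n : nat) (i j : nat) : R :=
  match n with
  | O => if Nat.eqb i j then 1 else 0
  | S n' => Rsum (map (fun k => Qpow M Q n' i k * Q k j) (seq 0 M))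
  end.

Definition stochastic (M : nat) (Q : nat -> nat -> R) : Prop :=
  (forall i j, (i < M)%nat -> (j < M)%nat -> 0 <= Q i j) /\
  (forall i, (i < M)%nat -> Rsum (map (fun j => Q i j) (seq 0 M)) = 1).

Definition irreducible (M : nat) (Q : nat -> nat -> R) : Prop :=
  forall i j, (i < M)%nat -> (j < M)%nat -> exists n, 0 < Qpow M Q n i j.

Definition err_moves (M : nat) (Q : nat -> nat -> R) (i j d : nat) (w : R)
  : list (state * R) :=
  ((i, j, S d), Q i i * w) :: ((j, j, 0%nat), Q i j * w) ::
  map (fun k => ((k, j, 1%nat), Q i k * w))
      (filter (fun k => andb (negb (Nat.eqb k i)) (negb (Nat.eqb k j))) (seq 0 M)).

Definition sync_moves (M : nat) (Q : nat -> nat -> R) (i : nat) (w : R)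
  : list (state * R) :=
  ((i, i, 0%nat), Q i i * w) ::
  map (fun k => ((k, i, 1%nat), Q i k * w))
      (filter (fun k => negb (Nat.eqb k i)) (seq 0 M)).

Definition kernel (M : nat) (Q : nat -> nat -> R) (ps : R) (s : state) (a : bool)
  : list (state * R) :=
  let '(i, j, d) := s in
  if Nat.eqb i j then sync_moves M Q i 1
  else if a then sync_moves M Q i ps ++ err_moves M Q i j d (1 - ps)
  else err_moves M Q i j d 1.

Definition stage_cost (D : nat -> nat -> R) (g : nat -> nat -> nat -> R)
  (lam : R) (s : state) (a : bool) : R :=
  let '(i, j, d) := s in
  (if Nat.eqb i j then 0 else D i j * g i j d) + (if a then lam else 0).

(* A (possibly randomized) history-dependent policy: given the past
   history (list of (state, action) pairs, most recent first) and the
   current state, it returns the probability of transmitting.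
   The history of states and actions carries exactly the information
   (X_{1:t}, Xhat_{1:t}, A_{1:t-1}) (Delta being a function of it and S_1). *)
Definition policy : Type := list (state * bool) -> state -> R.

Definition valid_policy (pi : policy) : Prop :=
  forall h s, 0 <= pi h s <= 1.

Definition act_prob (pi : policy) (h : list (state * bool)) (s : state)
  (a : bool) : R :=
  if a then pi h s else 1 - pi h s.

(* dist n = finite list of (history up to time n+1 incl. action A_{n+1},
   probability) describing the law of (S_1,A_1,...,S_{n+1},A_{n+1}). *)
Fixpoint dist (M : nat) (Q : nat -> nat -> R) (ps : R) (pi : policy)
  (s1 : state) (n : nat) : list (list (state * bool) * R) :=
  match n with
  | O => map (fun a => ([(s1, a)], act_prob pi [] s1 a)) [true; false]
  | S n' =>
      flat_map (fun hq =>
        let '(h, q) := hq in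
        match h with
        | [] => []
        | (s, a) :: _ =>
            flat_map (fun sp =>
              let '(s', pr) := sp in
              map (fun a' => ((s', a') :: h, q * pr * act_prob pi h s' a'))
                  [true; false])
              (kernel M Q ps s a)
        end) (dist M Q ps pi s1 n')
  end.

Definition exp_cost (M : nat) (Q : nat -> nat -> R) (ps : R)
  (D : nat -> nat -> R) (g : nat -> nat -> nat -> R) (lam : R)
  (pi : policy) (s1 : state) (n : nat) : R :=
  Rsum (map (fun hq =>
    let '(h, q) := hq in
    match h with
    | [] => 0
    | (s, a) :: _ => q * stage_cost D g lam s a
    end) (dist M Q ps pi s1 n)).

Definition avg_cost (M : nat) (Q : nat -> nat -> R) (ps : R)
  (D : nat -> nat -> R) (g : nat -> nat -> nat -> R) (lam : R)
  (pi : policy) (s1 : state) : Rbar :=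
  LimSup_seq (fun T =>
    Rsum (map (exp_cost M Q ps D g lam pi s1) (seq 0 (S T))) / INR (S T)).

Definition optimal (M : nat) (Q : nat -> nat -> R) (ps : R)
  (D : nat -> nat -> R) (g : nat -> nat -> nat -> R) (lam : R)
  (s1 : state) (pi : policy) : Prop :=
  valid_policy pi /\
  forall pi', valid_policy pi' ->
    Rbar_le (avg_cost M Q ps D g lam pi s1) (avg_cost M Q ps D g lam pi' s1).

(* Thresholds in {1,2,...} U {infinity}: Some k (k>=1) or None (= infinity). *)
Definition valid_threshold (tau : option nat) : Prop :=
  match tau with Some k => (1 <= k)%nat | None => True end.

Definition switching_policy (tau : nat -> nat -> option nat) : policy :=
  fun _ s =>
    let '(i, j, d) := s in
    if Nat.eqb i j then 0
    else match tau i j with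
         | Some k => if Nat.leb k d then 1 else 0
         | None => 0
         end.

From Pilot Require Import Defs.
From Stdlib Require Import Reals List Arith Lia Lra Bool Classical Wf_nat.
From Coquelicot Require Import Coquelicot.
Import ListNotations.
Open Scope R_scope.

(* Telescoping the expected relative value along the chain shows that a bounded-above
   subsolution of the average-cost optimality inequalities, [x + h <= l + P h] for all
   actions, bounds the cost of every policy below by [x], and a bounded-below
   supersolution for the actions of a stationary policy bounds its cost above by [x].
   For the symmetric source, a relative value that vanishes on synced states and
   depends only on the error age reduces both inequalities to a recursion in the age.
   For each [x], the least solution of the subsolution recursion either dips below a
   level at which it can be continued by a constant (then [x] is a lower bound), or
   not.  The lower bounds obtained this way form an open down-set.  If it is all of
   [R], every policy has infinite cost.  Otherwise, at its supremum [x*] the least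
   solution stays above that level, so its age increments shrink and it is
   nondecreasing; the active branch of its defining maximum then switches once, from
   idling to transmitting, and it is a supersolution for a threshold policy, whose
   cost is therefore [x*]. *)

(** * Finite sums *)

Lemma Rsum_app l1 l2 : Rsum (l1 ++ l2) = Rsum l1 + Rsum l2.
Proof. induction l1 as [|x l IH]; simpl; [lra | rewrite IH; lra]. Qed.

Lemma Rsum_map_ext {A} (f f' : A -> R) l :
  (forall x, In x l -> f x = f' x) -> Rsum (map f l) = Rsum (map f' l).
Proof.
  induction l as [|x l IH]; simpl; intros H; [reflexivity|].
  rewrite H, IH by auto. reflexivity.
Qed.

Lemma Rsum_map_le {A} (f f' : A -> R) l :
  (forall x, In x l -> f x <= f' x) -> Rsum (map f l) <= Rsum (map f' l).
Proof.
  induction l as [|x l IH]; simpl; intros H; [lra|].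
  pose proof (H x (or_introl eq_refl)). pose proof (IH (fun y Hy => H y (or_intror Hy))). lra.
Qed.

Lemma Rsum_map_scal {A} c (f : A -> R) l :
  Rsum (map (fun x => c * f x) l) = c * Rsum (map f l).
Proof. induction l as [|x l IH]; simpl; [ring | rewrite IH; ring]. Qed.

Lemma Rsum_map_const {A} c (l : list A) :
  Rsum (map (fun _ => c) l) = INR (length l) * c.
Proof.
  induction l as [|x l IH]; [simpl; ring|].
  cbn [map Rsum length]. rewrite S_INR, IH. ring.
Qed.

Lemma Rsum_map_flat_map {A B} (F : B -> R) (G : A -> list B) l :
  Rsum (map F (flat_map G l)) = Rsum (map (fun x => Rsum (map F (G x))) l).
Proof.
  induction l as [|x l IH]; simpl; [reflexivity|].
  rewrite map_app, Rsum_app, IH. reflexivity.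
Qed.

Lemma Rsum_map_const_on {A} (f : A -> R) c l :
  (forall x, In x l -> f x = c) -> Rsum (map f l) = INR (length l) * c.
Proof. intros Hf. rewrite (Rsum_map_ext f (fun _ => c)) by exact Hf. apply Rsum_map_const. Qed.

Lemma filter_andb {A} (f f' : A -> bool) l :
  filter (fun x => f x && f' x) l = filter f' (filter f l).
Proof.
  induction l as [|x l IH]; simpl; [reflexivity|].
  rewrite IH. destruct (f x); simpl; reflexivity.
Qed.

Lemma length_filter_neq (l : list nat) j : NoDup l -> In j l ->
  length (filter (fun k => negb (k =? j)) l) = pred (length l).
Proof.
  induction l as [|x l IH]; intros Hnd Hj; [destruct Hj|].
  apply NoDup_cons_iff in Hnd as [Hx Hnd]. simpl.
  destruct (Nat.eqb_spec x j) as [->|Hne]; simpl.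
  - rewrite (filter_ext_in (fun k => negb (k =? j)) (fun _ => true) l), List.filter_true;
      [reflexivity|].
    intros k Hk. apply negb_true_iff, Nat.eqb_neq. intros ->. contradiction.
  - destruct Hj as [->|Hj]; [contradiction|].
    rewrite IH by assumption. destruct l; [destruct Hj | reflexivity].
Qed.

Lemma length_filter_neq_seq M i : (i < M)%nat ->
  length (filter (fun k => negb (k =? i)) (seq 0 M)) = (M - 1)%nat.
Proof.
  intros Hi. rewrite length_filter_neq, length_seq; [lia | apply seq_NoDup | apply in_seq; lia].
Qed.

Lemma length_filter_neq2_seq M i j : (i < M)%nat -> (j < M)%nat -> i <> j ->
  length (filter (fun k => negb (k =? i) && negb (k =? j)) (seq 0 M)) = (M - 2)%nat.
Proof.
  intros Hi Hj Hij. rewrite filter_andb, length_filter_neq.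
  - rewrite length_filter_neq_seq by assumption. lia.
  - apply NoDup_filter, seq_NoDup.
  - apply filter_In. split; [apply in_seq; lia | apply negb_true_iff, Nat.eqb_neq; auto].
Qed.

(** * Average cost from the optimality inequalities *)

Lemma Rsum_seq_telescope (e H : nat -> R) x T :
  (forall n, e n <= x + H n - H (S n)) ->
  Rsum (map e (seq 0 (S T))) <= INR (S T) * x + H O - H (S T).
Proof.
  intros He. induction T as [|T IH].
  - specialize (He O). simpl. lra.
  - rewrite (seq_S (S T)), map_app, Rsum_app, S_INR. specialize (He (S T)). simpl in *. lra.
Qed.

Lemma is_lim_seq_plus_div_succ x C : is_lim_seq (fun T => x + C / INR (S T)) x.
Proof.
  assert (Hinv : is_lim_seq (fun T => / INR (S T)) 0).
  { replace (Finite 0) with (Rbar_inv p_infty) by reflexivity.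
    apply is_lim_seq_inv; [|discriminate].
    apply (is_lim_seq_incr_1 INR p_infty), is_lim_seq_INR. }
  apply (is_lim_seq_scal_l _ C) in Hinv. simpl in Hinv. rewrite Rmult_0_r in Hinv.
  pose proof (is_lim_seq_plus' _ _ x 0 (is_lim_seq_const x) Hinv) as Hsum.
  rewrite Rplus_0_r in Hsum. exact Hsum.
Qed.

Lemma LimSup_seq_le_of_bound (u : nat -> R) x C :
  (forall T, u T <= x + C / INR (S T)) -> Rbar_le (LimSup_seq u) x.
Proof.
  intros Hu.
  rewrite <- (is_LimSup_seq_unique _ _ (is_lim_LimSup_seq _ _ (is_lim_seq_plus_div_succ x C))).
  apply LimSup_le. exists O. intros T _. apply Hu.
Qed.

Lemma LimSup_seq_ge_of_bound (u : nat -> R) x C :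
  (forall T, x + C / INR (S T) <= u T) -> Rbar_le x (LimSup_seq u).
Proof.
  intros Hu.
  rewrite <- (is_LimSup_seq_unique _ _ (is_lim_LimSup_seq _ _ (is_lim_seq_plus_div_succ x C))).
  apply LimSup_le. exists O. intros T _. apply Hu.
Qed.

Definition cesaro_mean (e : nat -> R) (T : nat) : R := Rsum (map e (seq 0 (S T))) / INR (S T).

Lemma cesaro_mean_le (e H : nat -> R) x K T :
  (forall n, e n <= x + H n - H (S n)) -> (forall n, K <= H n) ->
  cesaro_mean e T <= x + (H O - K) / INR (S T).
Proof.
  intros He HK. unfold cesaro_mean.
  pose proof (Rsum_seq_telescope e H x T He). specialize (HK (S T)).
  assert (HT : 0 < INR (S T)) by (apply lt_0_INR; lia).
  apply (Rmult_le_reg_r (INR (S T))); [exact HT|].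
  unfold Rdiv. rewrite Rmult_plus_distr_r, !Rmult_assoc, Rinv_l by lra. lra.
Qed.

Lemma LimSup_cesaro_le (e H : nat -> R) x K :
  (forall n, e n <= x + H n - H (S n)) -> (forall n, K <= H n) ->
  Rbar_le (LimSup_seq (cesaro_mean e)) x.
Proof.
  intros He HK. apply (LimSup_seq_le_of_bound _ x (H O - K)). intros T.
  exact (cesaro_mean_le e H x K T He HK).
Qed.

Lemma LimSup_cesaro_ge (e H : nat -> R) x K :
  (forall n, x + H n - H (S n) <= e n) -> (forall n, H n <= K) ->
  Rbar_le x (LimSup_seq (cesaro_mean e)).
Proof.
  intros He HK. apply (LimSup_seq_ge_of_bound _ x (H O - K)). intros T.
  assert (Hneg : cesaro_mean (fun n => - e n) T = - cesaro_mean e T).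
  { unfold cesaro_mean. rewrite (Rsum_map_ext _ (fun n => -1 * e n)), Rsum_map_scal by (intros; ring).
    unfold Rdiv. ring. }
  pose proof (cesaro_mean_le (fun n => - e n) (fun n => - H n) (- x) (- K) T) as Hle.
  rewrite Hneg in Hle.
  assert (Hneg_le : - cesaro_mean e T <= - x + (- H O - - K) / INR (S T)).
  { apply Hle; intros n; [specialize (He n) | specialize (HK n)]; lra. }
  replace (- H O - - K) with (- (H O - K)) in Hneg_le by ring.
  unfold Rdiv in *. lra.
Qed.

Lemma Rbar_le_of_unbounded (y z : Rbar) : (forall x : R, Rbar_le x z) -> Rbar_le y z.
Proof.
  intros Hz. destruct z as [r| |].
  - specialize (Hz (r + 1)). simpl in Hz. lra.
  - destruct y; exact I.
  - destruct (Hz 0).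
Qed.

Lemma Rbar_le_of_forall_lt (xs : R) (z : Rbar) : (forall x, x < xs -> Rbar_le x z) -> Rbar_le xs z.
Proof.
  intros Hz. destruct z as [r| |]; simpl; [|exact I|].
  - apply Rnot_lt_le. intros Hr. specialize (Hz ((r + xs) / 2) ltac:(lra)). simpl in Hz. lra.
  - destruct (Hz (xs - 1) ltac:(lra)).
Qed.

Section Expectation.
Variables (M : nat) (Q : nat -> nat -> R) (ps : R) (s1 : state).

Definition expect (pi : policy) (n : nat) (f : state -> bool -> R) : R :=
  Rsum (map (fun hq : list (state * bool) * R => let '(h, q) := hq in
     match h with [] => 0 | (s, a) :: _ => q * f s a end)
     (Defs.dist M Q ps pi s1 n)).

Definition next_expect (h : state -> R) (s : state) (a : bool) : R :=
  Rsum (map (fun sp : state * R => snd sp * h (fst sp)) (kernel M Q ps s a)).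

Lemma expect_succ pi n h :
  expect pi (S n) (fun s _ => h s) = expect pi n (next_expect h).
Proof.
  unfold expect. cbn [Defs.dist]. rewrite Rsum_map_flat_map.
  apply Rsum_map_ext. intros [[|[s a] hist] q] _; [reflexivity|].
  rewrite Rsum_map_flat_map. unfold next_expect.
  rewrite <- Rsum_map_scal. apply Rsum_map_ext.
  intros [s' pr] _. simpl. unfold act_prob. ring.
Qed.

Definition kernel_valid : Prop :=
  forall s a, valid_state M s -> forall s' pr, In (s', pr) (kernel M Q ps s a) ->
    valid_state M s' /\ 0 <= pr.

Lemma act_prob_bounds pi hist s a : valid_policy pi -> 0 <= act_prob pi hist s a <= 1.
Proof. intros Hpi. unfold act_prob. specialize (Hpi hist s). destruct a; lra. Qed.

Hypotheses (KV : kernel_valid) (Hs1 : valid_state M s1)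
  (Hmass : forall s a, valid_state M s -> next_expect (fun _ => 1) s a = 1).

Lemma dist_support pi n hq : valid_policy pi -> In hq (Defs.dist M Q ps pi s1 n) ->
  exists s a hist q, hq = ((s, a) :: hist, q * act_prob pi hist s a)
    /\ 0 <= q /\ valid_state M s.
Proof.
  intros Hpi. revert hq. induction n as [|n IH]; intros hq Hin.
  - simpl in Hin. destruct Hin as [<-|[<-|[]]];
      [exists s1, true | exists s1, false]; exists [], 1;
      rewrite Rmult_1_l; repeat split; auto; lra.
  - cbn [Defs.dist] in Hin. apply in_flat_map in Hin as [[h q] [Hh Hin]].
    destruct (IH _ Hh) as (s & a & hist & q0 & E & Hq0 & Hs). injection E as -> ->.
    apply in_flat_map in Hin as [[s' pr] [Hk Hin]].
    destruct (KV s a Hs s' pr Hk) as [Hs' Hpr].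
    pose proof (act_prob_bounds pi hist s a Hpi).
    assert (0 <= q0 * act_prob pi hist s a * pr) by (apply Rmult_le_pos; [apply Rmult_le_pos|]; lra).
    simpl in Hin. destruct Hin as [<-|[<-|[]]];
      [exists s', true | exists s', false]; eexists _, _; repeat split; eauto.
Qed.

Section Policy.
Variables (pi : policy) (Hpi : valid_policy pi).

Lemma expect_le_on (P : state -> bool -> Prop) n f f' :
  (forall hist s a, P s a \/ act_prob pi hist s a = 0) ->
  (forall s a, valid_state M s -> P s a -> f s a <= f' s a) ->
  expect pi n f <= expect pi n f'.
Proof.
  intros HP Hf. unfold expect. apply Rsum_map_le. intros hq Hin.
  destruct (dist_support pi n hq Hpi Hin) as (s & a & hist & q & -> & Hq & Hs).
  pose proof (act_prob_bounds pi hist s a Hpi).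
  destruct (HP hist s a) as [Ha|Ha].
  - apply Rmult_le_compat_l; [apply Rmult_le_pos; lra | auto].
  - rewrite Ha, Rmult_0_r, !Rmult_0_l. lra.
Qed.

Lemma expect_le n f f' :
  (forall s a, valid_state M s -> f s a <= f' s a) -> expect pi n f <= expect pi n f'.
Proof. intros Hf. apply (expect_le_on (fun _ _ => True)); auto. Qed.

Lemma expect_affine n x f1 f2 :
  expect pi n (fun s a => x + f1 s a - f2 s a) =
  x * expect pi n (fun _ _ => 1) + expect pi n f1 - expect pi n f2.
Proof.
  unfold expect. induction (Defs.dist M Q ps pi s1 n) as [|[[|[s a] hist] q] l IH];
    simpl; rewrite ?IH; ring.
Qed.

Lemma expect_init h : expect pi O (fun s _ => h s) = h s1.
Proof. unfold expect. simpl. unfold act_prob. ring. Qed.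

Lemma expect_const n K : expect pi n (fun _ _ => K) = K.
Proof.
  assert (Hone : expect pi n (fun _ _ => 1) = 1).
  { induction n as [|n IH]; [exact (expect_init (fun _ => 1))|].
    rewrite expect_succ. transitivity (expect pi n (fun _ _ => 1)); [|exact IH].
    apply Rle_antisym; apply expect_le; intros s a Hs; rewrite Hmass by exact Hs; lra. }
  transitivity (K * expect pi n (fun _ _ => 1)); [|rewrite Hone; ring].
  unfold expect. rewrite <- Rsum_map_scal. apply Rsum_map_ext. intros [[|[s a] hist] q] _; ring.
Qed.

Lemma expect_drift n x h :
  expect pi n (fun s a => x + h s - next_expect h s a) =
  x + expect pi n (fun s _ => h s) - expect pi (S n) (fun s _ => h s).
Proof. rewrite expect_succ, expect_affine, expect_const. ring. Qed.

End Policy.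

Variables (D : nat -> nat -> R) (g : nat -> nat -> nat -> R) (lam : R).

Lemma exp_cost_expect pi n : exp_cost M Q ps D g lam pi s1 n = expect pi n (stage_cost D g lam).
Proof. reflexivity. Qed.

Theorem avg_cost_ge_of_subsolution pi x h K : valid_policy pi ->
  (forall s, valid_state M s -> h s <= K) ->
  (forall s a, valid_state M s -> x + h s <= stage_cost D g lam s a + next_expect h s a) ->
  Rbar_le x (avg_cost M Q ps D g lam pi s1).
Proof.
  intros Hpi HK Hsub.
  apply (LimSup_cesaro_ge _ (fun n => expect pi n (fun s _ => h s)) x K).
  - intros n. rewrite <- expect_drift, exp_cost_expect by exact Hpi.
    apply (expect_le pi Hpi). intros s a Hs. specialize (Hsub s a Hs). lra.
  - intros n. rewrite <- (expect_const pi Hpi n K). apply (expect_le pi Hpi). auto.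
Qed.

Theorem avg_cost_le_of_supersolution pi (act : state -> bool) x h K :
  (forall hist s, pi hist s = if act s then 1 else 0) ->
  (forall s, valid_state M s -> K <= h s) ->
  (forall s, valid_state M s -> stage_cost D g lam s (act s) + next_expect h s (act s) <= x + h s) ->
  Rbar_le (avg_cost M Q ps D g lam pi s1) x.
Proof.
  intros Hdet HK Hsup.
  assert (Hpi : valid_policy pi) by (intros hist s; rewrite Hdet; destruct (act s); lra).
  assert (Hact : forall hist s a, a = act s \/ act_prob pi hist s a = 0).
  { intros hist s a. unfold act_prob. rewrite Hdet. destruct a, (act s); auto; right; ring. }
  apply (LimSup_cesaro_le _ (fun n => expect pi n (fun s _ => h s)) x K).
  - intros n. rewrite <- expect_drift, exp_cost_expect by exact Hpi.
    apply (expect_le_on pi Hpi (fun s a => a = act s) n); [exact Hact|].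
    intros s a Hs ->. specialize (Hsup s Hs). lra.
  - intros n. rewrite <- (expect_const pi Hpi n K). apply (expect_le pi Hpi). auto.
Qed.

End Expectation.

Section KernelValid.
Variables (M : nat) (Q : nat -> nat -> R) (ps : R).
Hypothesis HQnn : forall i j, (i < M)%nat -> (j < M)%nat -> 0 <= Q i j.

Lemma sync_moves_valid i w s' pr : (i < M)%nat -> 0 <= w ->
  In (s', pr) (sync_moves M Q i w) -> valid_state M s' /\ 0 <= pr.
Proof.
  intros Hi Hw [E|Hin].
  - injection E as <- <-. split; [repeat split; auto | apply Rmult_le_pos; auto].
  - apply in_map_iff in Hin as [k [E Hk]]. injection E as <- <-.
    apply filter_In in Hk as [Hk Hki]. apply in_seq in Hk.
    apply negb_true_iff, Nat.eqb_neq in Hki.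
    split; [repeat split; auto; lia | apply Rmult_le_pos; auto; apply HQnn; lia].
Qed.

Lemma err_moves_valid i j d w s' pr : (i < M)%nat -> (j < M)%nat -> i <> j -> 0 <= w ->
  In (s', pr) (err_moves M Q i j d w) -> valid_state M s' /\ 0 <= pr.
Proof.
  intros Hi Hj Hij Hw [E|[E|Hin]].
  - injection E as <- <-.
    split; [repeat split; auto; right; split; auto; lia | apply Rmult_le_pos; auto].
  - injection E as <- <-. split; [repeat split; auto | apply Rmult_le_pos; auto].
  - apply in_map_iff in Hin as [k [E Hk]]. injection E as <- <-.
    apply filter_In in Hk as [Hk Hkij]. apply in_seq in Hk.
    apply andb_true_iff in Hkij as [Hki Hkj].
    apply negb_true_iff, Nat.eqb_neq in Hki. apply negb_true_iff, Nat.eqb_neq in Hkj.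
    split; [repeat split; auto; lia | apply Rmult_le_pos; auto; apply HQnn; lia].
Qed.

Lemma kernel_valid_of_nonneg : 0 <= ps <= 1 -> kernel_valid M Q ps.
Proof.
  intros Hps [[i j] d] a (Hi & Hj & _) s' pr Hin. unfold kernel in Hin.
  destruct (Nat.eqb_spec i j) as [<-|Hij].
  - apply (sync_moves_valid i 1); auto; lra.
  - destruct a; [apply in_app_or in Hin as [Hin|Hin]|].
    + apply (sync_moves_valid i ps); auto; lra.
    + apply (err_moves_valid i j d (1 - ps)); auto; lra.
    + apply (err_moves_valid i j d 1); auto; lra.
Qed.

End KernelValid.

(** * The symmetric source *)

Section SymmetricSource.
Variables (M : nat) (Q : nat -> nat -> R) (ps p pbar : R).
Hypothesis HQoff : forall i j, (i < M)%nat -> (j < M)%nat -> i <> j -> Q i j = p.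
Hypothesis HQdiag : forall i, (i < M)%nat -> Q i i = pbar.

Definition sym_value (hs : R) (u : nat -> R) (s : state) : R :=
  let '(i, j, d) := s in if i =? j then hs else u d.

Definition sync_mean (hs : R) (u : nat -> R) : R := pbar * hs + INR (M - 1) * p * u 1%nat.

Definition err_mean (hs : R) (u : nat -> R) (d : nat) : R :=
  pbar * u (S d) + p * hs + INR (M - 2) * p * u 1%nat.

Lemma sync_moves_mean hs u i w : (i < M)%nat ->
  Rsum (map (fun sp : state * R => snd sp * sym_value hs u (fst sp)) (sync_moves M Q i w))
  = w * sync_mean hs u.
Proof.
  intros Hi. unfold sync_moves, sync_mean. cbn [map Rsum fst snd]. rewrite map_map.
  rewrite (Rsum_map_const_on _ (w * p * u 1%nat)).
  - rewrite length_filter_neq_seq by assumption. simpl.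
    rewrite Nat.eqb_refl, HQdiag by assumption. ring.
  - intros k Hk. apply filter_In in Hk as [Hk Hki]. apply in_seq in Hk.
    apply negb_true_iff in Hki. simpl. rewrite Hki.
    rewrite HQoff by (apply Nat.eqb_neq in Hki; auto; lia). ring.
Qed.

Lemma err_moves_mean hs u i j d w : (i < M)%nat -> (j < M)%nat -> i <> j ->
  Rsum (map (fun sp : state * R => snd sp * sym_value hs u (fst sp)) (err_moves M Q i j d w))
  = w * err_mean hs u d.
Proof.
  intros Hi Hj Hij. unfold err_moves, err_mean. cbn [map Rsum fst snd]. rewrite map_map.
  rewrite (Rsum_map_const_on _ (w * p * u 1%nat)).
  - rewrite length_filter_neq2_seq by assumption. simpl.
    rewrite Nat.eqb_refl, HQdiag, HQoff by assumption.
    destruct (Nat.eqb_spec i j); [contradiction|]. ring.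
  - intros k Hk. apply filter_In in Hk as [Hk Hkij]. apply in_seq in Hk.
    apply andb_true_iff in Hkij as [Hki Hkj]. apply negb_true_iff in Hkj. simpl. rewrite Hkj.
    apply negb_true_iff, Nat.eqb_neq in Hki. rewrite HQoff by (auto; lia). ring.
Qed.

Lemma next_expect_sync hs u i a : (i < M)%nat ->
  next_expect M Q ps (sym_value hs u) (i, i, 0%nat) a = sync_mean hs u.
Proof.
  intros Hi. unfold next_expect, kernel. rewrite Nat.eqb_refl, sync_moves_mean by assumption. ring.
Qed.

Lemma next_expect_err hs u i j d a : (i < M)%nat -> (j < M)%nat -> i <> j ->
  next_expect M Q ps (sym_value hs u) (i, j, d) a =
  if a then ps * sync_mean hs u + (1 - ps) * err_mean hs u d else err_mean hs u d.
Proof.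
  intros Hi Hj Hij. unfold next_expect, kernel.
  destruct (Nat.eqb_spec i j); [contradiction|].
  destruct a; [rewrite map_app, Rsum_app, sync_moves_mean|]; rewrite ?err_moves_mean by assumption;
    auto; ring.
Qed.

Hypothesis Hsum : pbar + INR (M - 1) * p = 1.

Lemma next_expect_one s a : valid_state M s -> next_expect M Q ps (fun _ => 1) s a = 1.
Proof.
  destruct s as [[i j] d]. intros (Hi & Hj & Hs).
  transitivity (next_expect M Q ps (sym_value 1 (fun _ => 1)) (i, j, d) a).
  { unfold next_expect. apply Rsum_map_ext. intros [[[i' j'] d'] pr] _. simpl.
    destruct (i' =? j'); reflexivity. }
  destruct Hs as [[-> ->]|[Hij Hd]].
  - rewrite next_expect_sync by assumption. unfold sync_mean. lra.
  - assert (HM : INR (M - 1) = INR (M - 2) + 1).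
    { rewrite <- S_INR. f_equal. lia. }
    rewrite next_expect_err by assumption. unfold sync_mean, err_mean.
    destruct a; nra.
Qed.

End SymmetricSource.

(** * The reduced one-dimensional problem *)

Definition incr_lipschitz (f : R -> R) : Prop :=
  exists K, 0 <= K /\ forall x y, x <= y -> f x <= f y <= f x + K * (y - x).

Lemma incr_lipschitz_le f x y : incr_lipschitz f -> x <= y -> f x <= f y.
Proof. intros [K [_ Hf]] Hxy. apply (Hf x y Hxy). Qed.

Lemma incr_lipschitz_ext f f' : (forall x, f x = f' x) -> incr_lipschitz f -> incr_lipschitz f'.
Proof. intros E [K [HK Hf]]. exists K. split; [exact HK|]. intros x y Hxy. rewrite <- !E. auto. Qed.

Lemma incr_lipschitz_affine a e : 0 <= a -> incr_lipschitz (fun x => a * x + e).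
Proof. intros Ha. exists a. split; [exact Ha|]. intros x y Hxy. split; nra. Qed.

Lemma incr_lipschitz_plus f f' :
  incr_lipschitz f -> incr_lipschitz f' -> incr_lipschitz (fun x => f x + f' x).
Proof.
  intros [K [HK Hf]] [K' [HK' Hf']]. exists (K + K'). split; [lra|].
  intros x y Hxy. specialize (Hf x y Hxy). specialize (Hf' x y Hxy). split; lra.
Qed.

Lemma incr_lipschitz_scal a f : 0 <= a -> incr_lipschitz f -> incr_lipschitz (fun x => a * f x).
Proof.
  intros Ha [K [HK Hf]]. exists (a * K). split; [nra|].
  intros x y Hxy. specialize (Hf x y Hxy). split; nra.
Qed.

Lemma incr_lipschitz_max f f' :
  incr_lipschitz f -> incr_lipschitz f' -> incr_lipschitz (fun x => Rmax (f x) (f' x)).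
Proof.
  intros [K [HK Hf]] [K' [HK' Hf']]. exists (Rmax K K').
  split; [apply (Rle_trans _ K); [lra | apply Rmax_l]|].
  intros x y Hxy. specialize (Hf x y Hxy). specialize (Hf' x y Hxy).
  assert (K * (y - x) <= Rmax K K' * (y - x)) by (apply Rmult_le_compat_r; [lra | apply Rmax_l]).
  assert (K' * (y - x) <= Rmax K K' * (y - x)) by (apply Rmult_le_compat_r; [lra | apply Rmax_r]).
  set (L := Rmax K K') in *. unfold Rmax.
  destruct (Rle_dec (f x) (f' x)), (Rle_dec (f y) (f' y)); split; lra.
Qed.

Lemma incr_lipschitz_neg_right f x : incr_lipschitz f -> f x < 0 ->
  exists dl, 0 < dl /\ forall y, x <= y <= x + dl -> f y < 0.
Proof.
  intros [K [HK Hf]] Hx. exists (- f x / (2 * (K + 1))). split.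
  { apply Rdiv_lt_0_compat; lra. }
  intros y Hy. destruct (Hf x y ltac:(lra)) as [_ Hle].
  assert (K * (y - x) <= (K + 1) * (- f x / (2 * (K + 1)))) by (apply Rmult_le_compat; lra).
  replace ((K + 1) * (- f x / (2 * (K + 1)))) with (- f x / 2) in * by (field; lra). lra.
Qed.

Lemma incr_lipschitz_family_neg_right (f : nat -> R -> R) N x :
  (forall j, (j <= N)%nat -> incr_lipschitz (f j)) -> (forall j, (j <= N)%nat -> f j x < 0) ->
  exists y, x < y /\ forall j, (j <= N)%nat -> f j y < 0.
Proof.
  intros Hf Hx.
  assert (Hnear : exists dl, 0 < dl /\
            forall y, x <= y <= x + dl -> forall j, (j <= N)%nat -> f j y < 0).
  { induction N as [|N IH].
    - destruct (incr_lipschitz_neg_right (f O) x) as [dl [Hdl Hy]]; auto.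
      exists dl. split; [exact Hdl|]. intros y Hxy j Hj. replace j with O by lia. auto.
    - destruct IH as [dl1 [Hdl1 H1]]; [auto | auto |].
      destruct (incr_lipschitz_neg_right (f (S N)) x) as [dl2 [Hdl2 H2]]; auto.
      exists (Rmin dl1 dl2). split; [apply Rmin_glb_lt; assumption|].
      pose proof (Rmin_l dl1 dl2). pose proof (Rmin_r dl1 dl2).
      intros y Hxy j Hj. destruct (Nat.eq_dec j (S N)) as [->|Hne].
      + apply H2. lra.
      + apply H1; [lra | lia]. }
  destruct Hnear as [dl [Hdl Hy]]. exists (x + dl). split; [lra|]. apply Hy. lra.
Qed.

Lemma down_closed_open_sup (G : R -> Prop) x0 : G x0 ->
  (forall x y, y <= x -> G x -> G y) -> (forall x, G x -> exists y, x < y /\ G y) ->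
  (forall x, G x) \/ exists xs, ~ G xs /\ forall x, x < xs -> G x.
Proof.
  intros H0 Hdown Hopen.
  assert (Hcover : forall x, (exists y, G y /\ x <= y) -> G x) by (intros x [y [Hy Hxy]]; eauto).
  destruct (classic (bound G)) as [Hb|Hnb].
  - right. destruct (completeness G Hb (ex_intro _ x0 H0)) as [xs [Hub Hlub]].
    exists xs. split.
    + intros Hxs. destruct (Hopen xs Hxs) as [y [Hy Gy]]. specialize (Hub y Gy). lra.
    + intros x Hx. apply Hcover. apply NNPP. intros Hno.
      assert (Hx_ub : is_upper_bound G x).
      { intros y Gy. apply Rnot_lt_le. intros Hxy. apply Hno. exists y. split; [exact Gy | lra]. }
      specialize (Hlub x Hx_ub). lra.
  - left. intros x. apply Hcover. apply NNPP. intros Hno. apply Hnb. exists x.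
    intros y Gy. apply Rnot_lt_le. intros Hxy. apply Hno. exists y. split; [exact Gy | lra].
Qed.

Lemma nondecreasing_of_bounded_below (u : nat -> R) K :
  (forall k, K <= u k) ->
  (forall k, u (S k) <= u k -> u (S (S k)) - u (S k) <= u (S k) - u k) ->
  forall k, u k <= u (S k).
Proof.
  intros HK Hconv k0. apply Rnot_lt_le. intros Hdesc.
  set (dl := u k0 - u (S k0)).
  assert (Hstep : forall j, u (S (k0 + j)%nat) - u (k0 + j)%nat <= - dl).
  { induction j as [|j IH]; [rewrite Nat.add_0_r; unfold dl; lra|].
    rewrite Nat.add_succ_r. specialize (Hconv (k0 + j)%nat ltac:(unfold dl in IH; lra)). lra. }
  assert (Hlin : forall j, u (k0 + j)%nat <= u k0 - INR j * dl).
  { induction j as [|j IH]; [rewrite Nat.add_0_r; simpl; lra|].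
    rewrite Nat.add_succ_r, S_INR. specialize (Hstep j). lra. }
  destruct (INR_unbounded ((u k0 - K) / dl)) as [n Hn].
  specialize (Hlin n). specialize (HK (k0 + n)%nat).
  assert (Hdl : 0 < dl) by (unfold dl; lra).
  apply (Rmult_gt_compat_r dl) in Hn; [|exact Hdl].
  unfold Rdiv in Hn. rewrite Rmult_assoc, Rinv_l in Hn by lra. lra.
Qed.

Lemma prefix_abs_bound (u : nat -> R) N : exists B, forall k, (k <= N)%nat -> Rabs (u k) <= B.
Proof.
  induction N as [|N [B HB]].
  - exists (Rabs (u O)). intros k Hk. replace k with O by lia. lra.
  - exists (Rmax B (Rabs (u (S N)))). intros k Hk.
    destruct (Nat.eq_dec k (S N)) as [->|Hne]; [apply Rmax_r|].
    apply (Rle_trans _ B); [apply HB; lia | apply Rmax_l].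
Qed.

Definition threshold_act (tau : option nat) (d : nat) : bool :=
  match tau with Some k => k <=? d | None => false end.

Lemma upward_closed_threshold (P : nat -> Prop) : (forall k, P k -> P (S k)) ->
  exists tau, valid_threshold tau /\ forall k, threshold_act tau (S k) = true <-> P k.
Proof.
  intros Hup. destruct (classic (exists k, P k)) as [Hex|Hno].
  - destruct (dec_inh_nat_subset_has_unique_least_element P (fun n => classic (P n)) Hex)
      as [k0 [[Hk0 Hleast] _]].
    exists (Some (S k0)). split; [simpl; lia|]. intros k. simpl. rewrite Nat.leb_le. split.
    + intros Hle. induction Hle; auto.
    + intros Hk. apply Hleast, Hk.
  - exists None. split; [exact I|]. intros k. simpl. split; [discriminate|].
    intros Hk. exfalso. eauto.
Qed.

Section ReducedProblem.
Variables (p r ps lam pbar : R) (c : nat -> R).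
Hypotheses (Hp : 0 < p) (Hr : 0 <= r) (Hpbar : 0 < pbar) (Hsum : pbar + (p + r) = 1)
  (Hps : 0 <= ps <= 1) (Hlam : 0 <= lam)
  (Hc_nonneg : forall d, (1 <= d)%nat -> 0 <= c d)
  (Hc_mono : forall d d', (1 <= d)%nat -> (d <= d')%nat -> c d <= c d').

Definition qsum : R := p + r.
Definition sync_share : R := p / qsum.
Definition rho : R := (1 - ps) * pbar.

(* In the symmetric model [pbar] is the probability that the source stays put,
   [p] that it jumps to the estimate, [r] that it jumps to one of the other
   [M - 2] symbols, and [c d] is the cost of an error of age [d].  For a
   candidate average cost [x], a relative value function vanishing on synced
   states is a sequence [n], [n k] being its value at error age [k + 1].
   Pinning [n 0] to [x / qsum] makes the synced-state inequality tight; the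
   error-state inequalities then become those of [subsol] and [supsol]. *)
Definition cost_idle (x : R) (d : nat) : R := c d - sync_share * x.
Definition cost_tx (x : R) (d : nat) : R := c d + lam - (1 - ps) * sync_share * x.

Lemma qsum_pos : 0 < qsum.
Proof. unfold qsum. lra. Qed.

Lemma sync_share_nonneg : 0 <= sync_share.
Proof. pose proof qsum_pos. unfold sync_share. apply Rlt_le, Rdiv_lt_0_compat; lra. Qed.

Lemma rho_bounds : 0 <= rho <= pbar.
Proof. unfold rho. split; [apply Rmult_le_pos|]; nra. Qed.

Definition subsol (x : R) (n : nat -> R) : Prop :=
  n O = x / qsum /\
  forall k, n k - cost_idle x (S k) <= pbar * n (S k) /\ n k - cost_tx x (S k) <= rho * n (S k).

Definition subsol_feasible (x : R) : Prop := exists n K, subsol x n /\ forall k, n k <= K.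

Definition supsol (x : R) (tau : option nat) (n : nat -> R) : Prop :=
  n O = x / qsum /\
  forall k, (threshold_act tau (S k) = false -> pbar * n (S k) <= n k - cost_idle x (S k)) /\
            (threshold_act tau (S k) = true -> rho * n (S k) <= n k - cost_tx x (S k)).

Definition threshold_supsol (x : R) (tau : option nat) : Prop :=
  exists n K, supsol x tau n /\ forall k, K <= n k.

(* The largest constant sequence satisfying the subsolution inequalities: at age 1 they
   read [qsum * z <= cost_idle x 1] and [(1 - rho) * z <= cost_tx x 1], and [c] grows. *)
Definition floor_level (x : R) : R := Rmin (cost_idle x 1 / qsum) (cost_tx x 1 / (1 - rho)).

Lemma floor_level_stable x d : (1 <= d)%nat ->
  floor_level x - cost_idle x d <= pbar * floor_level x /\
  floor_level x - cost_tx x d <= rho * floor_level x.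
Proof.
  intros Hd. pose proof qsum_pos. pose proof rho_bounds.
  pose proof (Hc_mono 1 d (le_n 1) Hd).
  assert (cost_idle x 1 <= cost_idle x d) by (unfold cost_idle; lra).
  assert (cost_tx x 1 <= cost_tx x d) by (unfold cost_tx; lra).
  assert (qsum * floor_level x <= cost_idle x 1).
  { apply (Rmult_le_reg_r (/ qsum)); [apply Rinv_0_lt_compat; lra|].
    rewrite Rmult_comm, <- Rmult_assoc, Rinv_l by lra. rewrite Rmult_1_l. apply Rmin_l. }
  assert ((1 - rho) * floor_level x <= cost_tx x 1).
  { apply (Rmult_le_reg_r (/ (1 - rho))); [apply Rinv_0_lt_compat; lra|].
    rewrite Rmult_comm, <- Rmult_assoc, Rinv_l by lra. rewrite Rmult_1_l. apply Rmin_r. }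
  unfold qsum in *. split; nra.
Qed.

Lemma floor_level_opp_incr : incr_lipschitz (fun x => - floor_level x).
Proof.
  pose proof qsum_pos. pose proof rho_bounds. pose proof sync_share_nonneg.
  apply (incr_lipschitz_ext
           (fun x => Rmax (sync_share / qsum * x + - c 1%nat / qsum)
                          ((1 - ps) * sync_share / (1 - rho) * x + - (c 1%nat + lam) / (1 - rho)))).
  { intros x. unfold floor_level, cost_idle, cost_tx. rewrite Ropp_Rmin. f_equal; field; lra. }
  apply incr_lipschitz_max; apply incr_lipschitz_affine; unfold Rdiv.
  - apply Rmult_le_pos; [lra | apply Rlt_le, Rinv_0_lt_compat; lra].
  - apply Rmult_le_pos; [apply Rmult_le_pos; lra | apply Rlt_le, Rinv_0_lt_compat; lra].
Qed.

Lemma cost_tx_opp_incr d : incr_lipschitz (fun x => - cost_tx x d).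
Proof.
  apply (incr_lipschitz_ext (fun x => (1 - ps) * sync_share * x + - (c d + lam))).
  { intros x. unfold cost_tx. ring. }
  apply incr_lipschitz_affine. pose proof sync_share_nonneg. apply Rmult_le_pos; lra.
Qed.

Lemma neg1_below_floor_level : -1 / qsum < floor_level (-1).
Proof.
  pose proof qsum_pos. pose proof rho_bounds. pose proof sync_share_nonneg.
  pose proof (Hc_nonneg 1 (le_n 1)).
  assert (0 < 1 / qsum) by (apply Rdiv_lt_0_compat; lra).
  apply (Rlt_le_trans _ 0); [unfold Rdiv in *; lra|].
  unfold floor_level, cost_idle, cost_tx.
  apply Rmin_glb; apply Rdiv_le_0_compat; try lra.
  assert (0 <= (1 - ps) * sync_share) by (apply Rmult_le_pos; lra). lra.
Qed.

Lemma subsol_feasible_of_prefix x (m : nat -> R) k0 :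
  m O = x / qsum ->
  (forall k, (k < k0)%nat ->
     m k - cost_idle x (S k) <= pbar * m (S k) /\ m k - cost_tx x (S k) <= rho * m (S k)) ->
  m k0 <= floor_level x -> subsol_feasible x.
Proof.
  intros H0 Hm Hk0. destruct (prefix_abs_bound m k0) as [B HB].
  exists (fun k => if k <=? k0 then m k else floor_level x), (Rmax B (floor_level x)).
  split; [split|].
  - exact H0.
  - intros k. destruct (floor_level_stable x (S k) ltac:(lia)) as [F1 F2].
    destruct (Nat.leb_spec (S k) k0) as [HSk|HSk].
    + rewrite (proj2 (Nat.leb_le k k0)) by lia. apply Hm. lia.
    + destruct (Nat.leb_spec k k0) as [Hk|Hk]; [assert (k = k0) by lia; subst k|]; split; lra.
  - intros k. destruct (Nat.leb_spec k k0) as [Hk|Hk]; [|apply Rmax_r].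
    apply (Rle_trans _ B); [|apply Rmax_l]. apply (Rle_trans _ (Rabs (m k))); [apply Rle_abs | auto].
Qed.

Definition threshold_dichotomy : Prop :=
  (forall x, subsol_feasible x) \/
  exists xs tau, valid_threshold tau /\ threshold_supsol xs tau /\
    forall x, x < xs -> subsol_feasible x.

Lemma reduced_dichotomy_of_gap (G : R -> Prop) : G (-1) ->
  (forall x y, y <= x -> G x -> G y) -> (forall x, G x -> exists y, x < y /\ G y) ->
  (forall x, G x -> subsol_feasible x) ->
  (forall x, ~ G x -> exists tau, valid_threshold tau /\ threshold_supsol x tau) ->
  threshold_dichotomy.
Proof.
  intros H0 Hdown Hopen Hfeas Hsup.
  destruct (down_closed_open_sup G (-1) H0 Hdown Hopen) as [Hall|[xs [Hxs Hbelow]]].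
  - left. auto.
  - right. destruct (Hsup xs Hxs) as [tau [Htau Hts]]. exists xs, tau. auto.
Qed.

Section LossyChannel.
Hypothesis Hps1 : ps < 1.

Lemma rho_pos : 0 < rho.
Proof. unfold rho. apply Rmult_lt_0_compat; lra. Qed.

(* The least [z] with [y - cost_idle x d <= pbar * z] and [y - cost_tx x d <= rho * z];
   iterating it from [x / qsum] gives the least subsolution. *)
Definition greedy_step (x : R) (d : nat) (y : R) : R :=
  Rmax ((y - cost_idle x d) / pbar) ((y - cost_tx x d) / rho).

Fixpoint greedy (x : R) (k : nat) : R :=
  match k with
  | O => x / qsum
  | S k' => greedy_step x k (greedy x k')
  end.

Lemma greedy_step_ge x d y :
  y - cost_idle x d <= pbar * greedy_step x d y /\ y - cost_tx x d <= rho * greedy_step x d y.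
Proof.
  pose proof rho_pos. unfold greedy_step. split.
  - apply (Rle_trans _ (pbar * ((y - cost_idle x d) / pbar))); [right; field; lra|].
    apply Rmult_le_compat_l; [lra | apply Rmax_l].
  - apply (Rle_trans _ (rho * ((y - cost_tx x d) / rho))); [right; field; lra|].
    apply Rmult_le_compat_l; [lra | apply Rmax_r].
Qed.

Lemma greedy_step_cases x d y :
  pbar * greedy_step x d y = y - cost_idle x d \/ rho * greedy_step x d y = y - cost_tx x d.
Proof.
  pose proof rho_pos. unfold greedy_step. apply Rmax_case; [left|right]; field; lra.
Qed.

Lemma greedy_step_antitone x d d' y : (1 <= d)%nat -> (d <= d')%nat ->
  greedy_step x d' y <= greedy_step x d y.
Proof.
  intros Hd Hdd. pose proof rho_pos. pose proof (Hc_mono d d' Hd Hdd).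
  assert (A1 : (y - cost_idle x d') / pbar <= (y - cost_idle x d) / pbar).
  { unfold Rdiv, cost_idle. apply Rmult_le_compat_r; [apply Rlt_le, Rinv_0_lt_compat|]; lra. }
  assert (A2 : (y - cost_tx x d') / rho <= (y - cost_tx x d) / rho).
  { unfold Rdiv, cost_tx. apply Rmult_le_compat_r; [apply Rlt_le, Rinv_0_lt_compat|]; lra. }
  unfold greedy_step.
  apply Rmax_lub; [apply (Rle_trans _ _ _ A1), Rmax_l | apply (Rle_trans _ _ _ A2), Rmax_r].
Qed.

(* Both slopes [1 / pbar] and [1 / rho] are at least 1. *)
Lemma greedy_step_minus_mono x d y y' : y <= y' ->
  greedy_step x d y - y <= greedy_step x d y' - y'.
Proof.
  intros Hy. pose proof rho_pos. pose proof rho_bounds.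
  assert (y' - y <= (y' - y) / pbar).
  { assert (0 <= (y' - y) * (1 - pbar) / pbar) by (apply Rdiv_le_0_compat; nra).
    replace ((y' - y) / pbar) with (y' - y + (y' - y) * (1 - pbar) / pbar) by (field; lra). lra. }
  assert (y' - y <= (y' - y) / rho).
  { assert (0 <= (y' - y) * (1 - rho) / rho) by (apply Rdiv_le_0_compat; nra).
    replace ((y' - y) / rho) with (y' - y + (y' - y) * (1 - rho) / rho) by (field; lra). lra. }
  unfold greedy_step.
  replace ((y' - cost_idle x d) / pbar) with ((y - cost_idle x d) / pbar + (y' - y) / pbar)
    by (field; lra).
  replace ((y' - cost_tx x d) / rho) with ((y - cost_tx x d) / rho + (y' - y) / rho)
    by (field; lra).
  unfold Rmax. destruct (Rle_dec _ _), (Rle_dec _ _); lra.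
Qed.

Lemma greedy_incr k : incr_lipschitz (fun x => greedy x k).
Proof.
  pose proof qsum_pos. pose proof rho_pos. pose proof sync_share_nonneg.
  induction k as [|k IH]; simpl.
  - apply (incr_lipschitz_ext (fun x => / qsum * x + 0)); [intros x; unfold Rdiv; ring|].
    apply incr_lipschitz_affine, Rlt_le, Rinv_0_lt_compat; lra.
  - unfold greedy_step. apply incr_lipschitz_max.
    + apply (incr_lipschitz_ext (fun x => / pbar * (greedy x k + (sync_share * x + - c (S k))))).
      { intros x. unfold cost_idle. field. lra. }
      apply incr_lipschitz_scal; [apply Rlt_le, Rinv_0_lt_compat; lra|].
      apply incr_lipschitz_plus; [exact IH | apply incr_lipschitz_affine; lra].
    + apply (incr_lipschitz_ext
               (fun x => / rho * (greedy x k + ((1 - ps) * sync_share * x + - (c (S k) + lam))))).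
      { intros x. unfold cost_tx. field. lra. }
      apply incr_lipschitz_scal; [apply Rlt_le, Rinv_0_lt_compat; lra|].
      apply incr_lipschitz_plus; [exact IH | apply incr_lipschitz_affine; apply Rmult_le_pos; lra].
Qed.

Definition greedy_gap (x : R) : Prop := exists k, greedy x k < floor_level x.

Lemma greedy_gap_down x y : y <= x -> greedy_gap x -> greedy_gap y.
Proof.
  intros Hyx [k Hk]. exists k.
  pose proof (incr_lipschitz_le _ y x (greedy_incr k) Hyx).
  pose proof (incr_lipschitz_le _ y x floor_level_opp_incr Hyx). simpl in *. lra.
Qed.

Lemma greedy_gap_open x : greedy_gap x -> exists y, x < y /\ greedy_gap y.
Proof.
  intros [k Hk].
  destruct (incr_lipschitz_family_neg_right (fun _ y => greedy y k + - floor_level y) 0 x)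
    as [y [Hxy Hy]].
  - intros j _. apply incr_lipschitz_plus; [apply greedy_incr | apply floor_level_opp_incr].
  - intros j _. lra.
  - exists y. split; [exact Hxy|]. exists k. specialize (Hy O (le_n O)). simpl in Hy. lra.
Qed.

Lemma greedy_gap_feasible x : greedy_gap x -> subsol_feasible x.
Proof.
  intros [k Hk]. apply (subsol_feasible_of_prefix x (greedy x) k); [reflexivity | | lra].
  intros j _. apply greedy_step_ge.
Qed.

Lemma greedy_nondecreasing x : (forall k, floor_level x <= greedy x k) ->
  forall k, greedy x k <= greedy x (S k).
Proof.
  intros Hfloor. apply (nondecreasing_of_bounded_below _ (floor_level x) Hfloor).
  intros k Hk. change (greedy x (S (S k))) with (greedy_step x (S (S k)) (greedy x (S k))).
  change (greedy x (S k)) with (greedy_step x (S k) (greedy x k)) at 3.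
  pose proof (greedy_step_antitone x (S k) (S (S k)) (greedy x (S k)) ltac:(lia) ltac:(lia)).
  pose proof (greedy_step_minus_mono x (S k) (greedy x (S k)) (greedy x k) Hk). lra.
Qed.

(* [lam + ps * sync_share * x = cost_tx x d - cost_idle x d] is the price of a
   transmission and [ps * pbar * greedy_step x d y] its expected saving. *)
Lemma greedy_step_branch x d y :
  (lam + ps * sync_share * x <= ps * pbar * greedy_step x d y ->
   rho * greedy_step x d y <= y - cost_tx x d) /\
  (~ lam + ps * sync_share * x <= ps * pbar * greedy_step x d y ->
   pbar * greedy_step x d y <= y - cost_idle x d).
Proof.
  assert (Egap : cost_tx x d - cost_idle x d = lam + ps * sync_share * x)
    by (unfold cost_tx, cost_idle; ring).
  assert (Erho : rho * greedy_step x d y = pbar * greedy_step x d y - ps * pbar * greedy_step x d y)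
    by (unfold rho; ring).
  split; intros Hc; [|apply Rnot_le_lt in Hc];
    destruct (greedy_step_cases x d y); lra.
Qed.

Lemma greedy_threshold_supsol x : (forall k, floor_level x <= greedy x k) ->
  exists tau, valid_threshold tau /\ threshold_supsol x tau.
Proof.
  intros Hfloor. pose proof (greedy_nondecreasing x Hfloor) as Hmono.
  destruct (upward_closed_threshold
              (fun k => lam + ps * sync_share * x <= ps * pbar * greedy x (S k))) as [tau [Htau Hiff]].
  { intros k Hk. apply (Rle_trans _ _ _ Hk), Rmult_le_compat_l;
      [apply Rmult_le_pos; lra | apply Hmono]. }
  exists tau. split; [exact Htau|]. exists (greedy x), (floor_level x). split; [|exact Hfloor].
  split; [reflexivity|]. intros k.
  destruct (greedy_step_branch x (S k) (greedy x k)) as [Btx Bidle]. split; intros E.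
  - apply Bidle. intros Hc. apply Hiff in Hc. congruence.
  - apply Btx, Hiff, E.
Qed.

Lemma reduced_dichotomy_lossy :
  threshold_dichotomy.
Proof.
  apply (reduced_dichotomy_of_gap greedy_gap).
  - exists O. apply neg1_below_floor_level.
  - exact greedy_gap_down.
  - exact greedy_gap_open.
  - exact greedy_gap_feasible.
  - intros x Hx. apply greedy_threshold_supsol. intros k. apply Rnot_lt_le. intros Hk.
    apply Hx. exists k. exact Hk.
Qed.

End LossyChannel.

Section PerfectChannel.
Hypothesis Hps1 : ps = 1.

Lemma rho_zero : rho = 0.
Proof. unfold rho. rewrite Hps1. ring. Qed.

(* With [rho = 0] transmitting puts no constraint on the next value, only the
   cap [n k <= cost_tx x (S k)]; the least continuation is the idle one. *)
Fixpoint greedy_idle (x : R) (k : nat) : R :=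
  match k with
  | O => x / qsum
  | S k' => (greedy_idle x k' - cost_idle x k) / pbar
  end.

Lemma greedy_idle_succ x k : pbar * greedy_idle x (S k) = greedy_idle x k - cost_idle x (S k).
Proof. simpl. field. lra. Qed.

Lemma greedy_idle_incr k : incr_lipschitz (fun x => greedy_idle x k).
Proof.
  pose proof qsum_pos. pose proof sync_share_nonneg.
  induction k as [|k IH]; simpl.
  - apply (incr_lipschitz_ext (fun x => / qsum * x + 0)); [intros x; unfold Rdiv; ring|].
    apply incr_lipschitz_affine, Rlt_le, Rinv_0_lt_compat; lra.
  - apply (incr_lipschitz_ext (fun x => / pbar * (greedy_idle x k + (sync_share * x + - c (S k))))).
    { intros x. unfold cost_idle. field. lra. }
    apply incr_lipschitz_scal; [apply Rlt_le, Rinv_0_lt_compat; lra|].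
    apply incr_lipschitz_plus; [exact IH | apply incr_lipschitz_affine; lra].
Qed.

Definition idle_gap (x : R) : Prop :=
  exists k, greedy_idle x k < floor_level x /\
    forall j, (j < k)%nat -> greedy_idle x j < cost_tx x (S j).

Lemma idle_gap_down x y : y <= x -> idle_gap x -> idle_gap y.
Proof.
  intros Hyx [k [Hk Hj]]. exists k. split.
  - pose proof (incr_lipschitz_le _ y x (greedy_idle_incr k) Hyx).
    pose proof (incr_lipschitz_le _ y x floor_level_opp_incr Hyx). simpl in *. lra.
  - intros j Hjk. specialize (Hj j Hjk).
    pose proof (incr_lipschitz_le _ y x (greedy_idle_incr j) Hyx).
    pose proof (incr_lipschitz_le _ y x (cost_tx_opp_incr (S j)) Hyx). simpl in *. lra.
Qed.

Lemma idle_gap_open x : idle_gap x -> exists y, x < y /\ idle_gap y.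
Proof.
  intros [k [Hk Hj]].
  destruct (incr_lipschitz_family_neg_right
              (fun j y => if j =? k then greedy_idle y k + - floor_level y
                          else greedy_idle y j + - cost_tx y (S j)) k x) as [y [Hxy Hy]].
  - intros j _. destruct (j =? k); apply incr_lipschitz_plus;
      auto using greedy_idle_incr, floor_level_opp_incr, cost_tx_opp_incr.
  - intros j Hjk. destruct (Nat.eqb_spec j k) as [->|Hne]; [lra|]. specialize (Hj j ltac:(lia)). lra.
  - exists y. split; [exact Hxy|]. exists k. split.
    + specialize (Hy k (le_n k)). rewrite Nat.eqb_refl in Hy. lra.
    + intros j Hjk. specialize (Hy j ltac:(lia)). destruct (Nat.eqb_spec j k); [lia | lra].
Qed.

Lemma idle_gap_feasible x : idle_gap x -> subsol_feasible x.
Proof.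
  intros [k [Hk Hj]]. apply (subsol_feasible_of_prefix x (greedy_idle x) k); [reflexivity | | lra].
  intros j Hjk. rewrite greedy_idle_succ, rho_zero. specialize (Hj j Hjk). split; lra.
Qed.

Lemma idle_threshold_supsol x : ~ idle_gap x ->
  exists tau, valid_threshold tau /\ threshold_supsol x tau.
Proof.
  intros Hgap.
  destruct (classic (exists k0, cost_tx x (S k0) <= greedy_idle x k0)) as [[k0 Hk0]|Hnone].
  - exists (Some (S k0)). split; [simpl; lia|].
    destruct (prefix_abs_bound (greedy_idle x) k0) as [B HB].
    exists (fun k => if threshold_act (Some (S k0)) k then cost_tx x (S k) else greedy_idle x k),
      (Rmin (- B) 0).
    split; [split; [reflexivity|] |].
    + intros k. unfold threshold_act. rewrite rho_zero, Rmult_0_l.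
      destruct (Nat.leb_spec (S k0) (S k)) as [Hk|Hk]; split; try discriminate; intros _;
        destruct (Nat.leb_spec (S k0) k); try lia.
      * lra.
      * replace k with k0 by lia. lra.
      * rewrite greedy_idle_succ. lra.
    + intros k. unfold threshold_act. destruct (Nat.leb_spec (S k0) k) as [Hk|Hk].
      * pose proof (Hc_nonneg (S k) ltac:(lia)). pose proof (Rmin_r (- B) 0).
        unfold cost_tx. rewrite Hps1. lra.
      * specialize (HB k ltac:(lia)). pose proof (Rmin_l (- B) 0).
        pose proof (Rabs_le_between (greedy_idle x k) B) as [HBl _]. specialize (HBl HB). lra.
  - exists None. split; [exact I|]. exists (greedy_idle x), (floor_level x).
    split; [split; [reflexivity|] |].
    + intros k. cbn [threshold_act]. split; [intros _; rewrite greedy_idle_succ; lra | discriminate].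
    + intros k. apply Rnot_lt_le. intros Hk. apply Hgap. exists k. split; [exact Hk|].
      intros j _. apply Rnot_le_lt. intros Hj. apply Hnone. exists j. exact Hj.
Qed.

Lemma reduced_dichotomy_perfect :
  threshold_dichotomy.
Proof.
  apply (reduced_dichotomy_of_gap idle_gap).
  - exists O. split; [apply neg1_below_floor_level | intros j Hj; lia].
  - exact idle_gap_down.
  - exact idle_gap_open.
  - exact idle_gap_feasible.
  - exact idle_threshold_supsol.
Qed.

End PerfectChannel.

Theorem reduced_dichotomy :
  threshold_dichotomy.
Proof.
  destruct (Req_dec ps 1) as [E|E];
    [exact (reduced_dichotomy_perfect E) | apply reduced_dichotomy_lossy; lra].
Qed.

End ReducedProblem.

(** * Threshold optimality *)

Definition switch_act (tau : option nat) (s : state) : bool :=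
  let '(i, j, d) := s in if i =? j then false else threshold_act tau d.

Lemma switching_policy_deterministic tau hist s :
  switching_policy (fun _ _ => tau) hist s = if switch_act tau s then 1 else 0.
Proof.
  destruct s as [[i j] d]. unfold switching_policy, switch_act, threshold_act.
  destruct (i =? j); [reflexivity|]. destruct tau as [k|]; [destruct (k <=? d)|]; reflexivity.
Qed.

Lemma switching_policy_valid tau : valid_policy (switching_policy (fun _ _ => tau)).
Proof. intros hist s. rewrite switching_policy_deterministic. destruct (switch_act tau s); lra. Qed.

Section SymmetricMDP.
Variables (M : nat) (Q : nat -> nat -> R) (ps : R)
  (D : nat -> nat -> R) (g : nat -> nat -> nat -> R) (lam : R) (s1 : state)
  (D0 : R) (g0 : nat -> R) (p pbar : R).
Hypotheses (HQ : stochastic M Q) (Hps : 0 <= ps <= 1) (Hlam : 0 <= lam) (Hs1 : valid_state M s1)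
  (HD : forall i j, (i < M)%nat -> (j < M)%nat -> i <> j -> 0 < D i j)
  (Hg_nn : forall i j d, (i < M)%nat -> (j < M)%nat -> i <> j -> (1 <= d)%nat -> 0 <= g i j d)
  (Hg_mono : forall i j d d', (i < M)%nat -> (j < M)%nat -> i <> j ->
               (1 <= d)%nat -> (d <= d')%nat -> g i j d <= g i j d')
  (HDsym : forall i j, (i < M)%nat -> (j < M)%nat -> i <> j -> D i j = D0)
  (Hgsym : forall i j, (i < M)%nat -> (j < M)%nat -> i <> j -> g i j = g0)
  (HQoff : forall i j, (i < M)%nat -> (j < M)%nat -> i <> j -> Q i j = p)
  (HQdiag : forall i, (i < M)%nat -> Q i i = pbar)
  (Hsum : pbar + INR (M - 1) * p = 1).

Let KV : kernel_valid M Q ps := kernel_valid_of_nonneg M Q ps (proj1 HQ) Hps.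
Let Hmass := next_expect_one M Q ps p pbar HQoff HQdiag Hsum.

Lemma stage_cost_nonneg s a : valid_state M s -> 0 <= stage_cost D g lam s a.
Proof.
  destruct s as [[i j] d]. intros (Hi & Hj & Hs). unfold stage_cost.
  destruct (Nat.eqb_spec i j) as [->|Hij]; [destruct a; lra|].
  destruct Hs as [[? _]|[_ Hd]]; [contradiction|].
  pose proof (HD i j Hi Hj Hij). pose proof (Hg_nn i j d Hi Hj Hij Hd).
  assert (0 <= D i j * g i j d) by (apply Rmult_le_pos; lra). destruct a; lra.
Qed.

Lemma avg_cost_nonneg pi : valid_policy pi -> Rbar_le 0 (avg_cost M Q ps D g lam pi s1).
Proof.
  intros Hpi.
  apply (avg_cost_ge_of_subsolution M Q ps s1 KV Hs1 Hmass D g lam pi 0 (fun _ => 0) 0 Hpi).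
  - intros; lra.
  - intros s a Hs. pose proof (stage_cost_nonneg s a Hs).
    unfold next_expect. rewrite (Rsum_map_const_on _ 0); [lra | intros; simpl; ring].
Qed.

Lemma avg_cost_never_transmit_single_symbol : M = 1%nat ->
  Rbar_le (avg_cost M Q ps D g lam (switching_policy (fun _ _ => None)) s1) 0.
Proof.
  intros HM1. apply (avg_cost_le_of_supersolution M Q ps s1 KV Hs1 Hmass D g lam _ (switch_act None)
                      0 (fun _ => 0) 0 (switching_policy_deterministic None)).
  - intros; lra.
  - intros [[i j] d] (Hi & Hj & _). replace j with i by lia. cbn. rewrite Nat.eqb_refl.
    unfold next_expect. rewrite (Rsum_map_const_on _ 0); [lra | intros; simpl; ring].
Qed.

Section TwoSymbols.
Hypotheses (HM2 : (2 <= M)%nat) (Hp : 0 < p).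

Let r : R := INR (M - 2) * p.
Let c (d : nat) : R := D0 * g0 d.
Let hval (n : nat -> R) : state -> R := sym_value 0 (fun d => n (pred d)).

Let Hr : 0 <= r.
Proof. apply Rmult_le_pos; [apply pos_INR | lra]. Qed.

Lemma qsum_sym : qsum p r = INR (M - 1) * p.
Proof.
  unfold qsum, r. replace (M - 1)%nat with (S (M - 2)) by lia. rewrite S_INR. ring.
Qed.

Lemma bellman_gap_sync x n i a : (i < M)%nat -> n O = x / qsum p r ->
  stage_cost D g lam (i, i, 0%nat) a + next_expect M Q ps (hval n) (i, i, 0%nat) a
  - (x + hval n (i, i, 0%nat)) = if a then lam else 0.
Proof.
  intros Hi Hn0. pose proof (qsum_pos p r Hp Hr).
  unfold hval. rewrite (next_expect_sync M Q ps p pbar HQoff HQdiag) by assumption.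
  unfold stage_cost, sync_mean, sym_value. rewrite Nat.eqb_refl. simpl pred.
  rewrite Hn0, <- qsum_sym. destruct a; field; lra.
Qed.

Lemma bellman_gap_err x n i j k a : (i < M)%nat -> (j < M)%nat -> i <> j -> n O = x / qsum p r ->
  stage_cost D g lam (i, j, S k) a + next_expect M Q ps (hval n) (i, j, S k) a
  - (x + hval n (i, j, S k))
  = if a then rho ps pbar * n (S k) - (n k - cost_tx p r ps lam c x (S k))
    else pbar * n (S k) - (n k - cost_idle p r c x (S k)).
Proof.
  intros Hi Hj Hij Hn0. pose proof (qsum_pos p r Hp Hr).
  unfold hval. rewrite (next_expect_err M Q ps p pbar HQoff HQdiag) by assumption.
  unfold stage_cost, sync_mean, err_mean, sym_value, cost_idle, cost_tx, sync_share, rho.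
  destruct (Nat.eqb_spec i j); [contradiction|]. rewrite HDsym, Hgsym by assumption. simpl pred.
  rewrite Hn0, <- qsum_sym. change (INR (M - 2) * p) with r. unfold c, qsum in *.
  destruct a; field; lra.
Qed.

Lemma avg_cost_ge_of_feasible x pi : valid_policy pi -> subsol_feasible p r ps lam pbar c x ->
  Rbar_le x (avg_cost M Q ps D g lam pi s1).
Proof.
  intros Hpi (n & K & [Hn0 Hn] & HK).
  apply (avg_cost_ge_of_subsolution M Q ps s1 KV Hs1 Hmass D g lam pi x (hval n) (Rmax 0 K) Hpi).
  - intros [[i j] d] _. unfold hval, sym_value. destruct (i =? j); [apply Rmax_l|].
    apply (Rle_trans _ K); [apply HK | apply Rmax_r].
  - intros [[i j] d] a (Hi & Hj & [[<- ->]|[Hij Hd]]).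
    + pose proof (bellman_gap_sync x n i a Hi Hn0). destruct a; lra.
    + destruct d as [|k]; [lia|]. pose proof (bellman_gap_err x n i j k a Hi Hj Hij Hn0).
      destruct (Hn k). destruct a; lra.
Qed.

Lemma avg_cost_le_of_threshold_supsol xs tau : threshold_supsol p r ps lam pbar c xs tau ->
  Rbar_le (avg_cost M Q ps D g lam (switching_policy (fun _ _ => tau)) s1) xs.
Proof.
  intros (n & K & [Hn0 Hn] & HK).
  apply (avg_cost_le_of_supersolution M Q ps s1 KV Hs1 Hmass D g lam _ (switch_act tau)
           xs (hval n) (Rmin 0 K) (switching_policy_deterministic tau)).
  - intros [[i j] d] _. unfold hval, sym_value. destruct (i =? j); [apply Rmin_l|].
    apply (Rle_trans _ K); [apply Rmin_r | apply HK].
  - intros [[i j] d] (Hi & Hj & [[<- ->]|[Hij Hd]]).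
    + pose proof (bellman_gap_sync xs n i false Hi Hn0). unfold switch_act. rewrite Nat.eqb_refl. lra.
    + destruct d as [|k]; [lia|]. unfold switch_act.
      destruct (Nat.eqb_spec i j); [contradiction|].
      pose proof (bellman_gap_err xs n i j k (threshold_act tau (S k)) Hi Hj Hij Hn0).
      destruct (Hn k) as [Hidle Htx]. destruct (threshold_act tau (S k)).
      * specialize (Htx eq_refl). lra.
      * specialize (Hidle eq_refl). lra.
Qed.

Hypothesis Hdiag : exists i, (i < M)%nat /\ 0 < Q i i.

Lemma symmetric_threshold_optimal_two_symbols :
  exists tau, valid_threshold tau /\ optimal M Q ps D g lam s1 (switching_policy (fun _ _ => tau)).
Proof.
  assert (Hpbar : 0 < pbar) by (destruct Hdiag as [i [Hi HQi]]; rewrite <- (HQdiag i Hi); exact HQi).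
  assert (Hsum' : pbar + (p + r) = 1) by (fold (qsum p r); rewrite qsum_sym; exact Hsum).
  assert (Hc : forall d, (1 <= d)%nat -> 0 < D0 /\ 0 <= g0 d).
  { intros d Hd. rewrite <- (HDsym 0 1), <- (Hgsym 0 1) by lia.
    split; [apply HD | apply Hg_nn]; lia. }
  assert (Hc_nonneg : forall d, (1 <= d)%nat -> 0 <= c d).
  { intros d Hd. destruct (Hc d Hd). unfold c. apply Rmult_le_pos; lra. }
  assert (Hc_mono : forall d d', (1 <= d)%nat -> (d <= d')%nat -> c d <= c d').
  { intros d d' Hd Hdd. destruct (Hc d Hd). unfold c. apply Rmult_le_compat_l; [lra|].
    rewrite <- (Hgsym 0 1) by lia. apply Hg_mono; lia. }
  destruct (reduced_dichotomy p r ps lam pbar c Hp Hr Hpbar Hsum' Hps Hlam Hc_nonneg Hc_mono)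
    as [Hinf | (xs & tau & Htau & Hsup & Hbelow)].
  - exists None. split; [exact I|]. split; [apply switching_policy_valid|]. intros pi Hpi.
    apply Rbar_le_of_unbounded. intros x. apply avg_cost_ge_of_feasible; auto.
  - exists tau. split; [exact Htau|]. split; [apply switching_policy_valid|]. intros pi Hpi.
    apply (Rbar_le_trans _ xs); [apply avg_cost_le_of_threshold_supsol, Hsup|].
    apply Rbar_le_of_forall_lt. intros x Hx. apply avg_cost_ge_of_feasible; auto.
Qed.

End TwoSymbols.

Theorem symmetric_threshold_optimal : 0 < p -> (exists i, (i < M)%nat /\ 0 < Q i i) ->
  exists tau, valid_threshold tau /\ optimal M Q ps D g lam s1 (switching_policy (fun _ _ => tau)).
Proof.
  intros Hp Hdiag. destruct (Nat.eq_dec M 1) as [HM1|HM1].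
  - exists None. split; [exact I|]. split; [apply switching_policy_valid|]. intros pi Hpi.
    apply (Rbar_le_trans _ 0);
      [exact (avg_cost_never_transmit_single_symbol HM1) | exact (avg_cost_nonneg pi Hpi)].
  - apply symmetric_threshold_optimal_two_symbols; [|exact Hp|exact Hdiag].
    destruct s1 as [[i j] d]. destruct Hs1. lia.
Qed.

End SymmetricMDP.

Theorem corollary2
  (M : nat) (Q : nat -> nat -> R) (ps : R)
  (D : nat -> nat -> R) (g : nat -> nat -> nat -> R) (lam : R)
  (s1 : state)
  (* standing assumptions of the model *)
  (HQ : stochastic M Q) (Hirr : irreducible M Q)
  (Hdiag : exists i, (i < M)%nat /\ 0 < Q i i)
  (Hps : 0 <= ps <= 1)
  (HD : forall i j, (i < M)%nat -> (j < M)%nat -> i <> j -> 0 < D i j)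
  (Hg_nn : forall i j d, (i < M)%nat -> (j < M)%nat -> i <> j -> (1 <= d)%nat -> 0 <= g i j d)
  (Hg_mono : forall i j d d', (i < M)%nat -> (j < M)%nat -> i <> j ->
               (1 <= d)%nat -> (d <= d')%nat -> g i j d <= g i j d')
  (Hlam : 0 <= lam)
  (Hs1 : valid_state M s1)
  (* non-prioritized, symmetric source *)
  (D0 : R) (g0 : nat -> R) (p pbar : R)
  (HDsym : forall i j, (i < M)%nat -> (j < M)%nat -> i <> j -> D i j = D0)
  (Hgsym : forall i j, (i < M)%nat -> (j < M)%nat -> i <> j -> g i j = g0)
  (HQoff : forall i j, (i < M)%nat -> (j < M)%nat -> i <> j -> Q i j = p)
  (HQdiag : forall i, (i < M)%nat -> Q i i = pbar)
  (Hsum : pbar + INR (M - 1) * p = 1)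
  (Hp : 0 < p < 1) :
  exists tau : option nat,
    valid_threshold tau /\
    optimal M Q ps D g lam s1 (switching_policy (fun _ _ => tau)).
Proof.
  exact (symmetric_threshold_optimal M Q ps D g lam s1 D0 g0 p pbar HQ Hps Hlam Hs1 HD Hg_nn Hg_mono
           HDsym Hgsym HQoff HQdiag Hsum (proj1 Hp) Hdiag).
Qed.
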